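(* Assume that for every $t$ the local noises $w^1_t,\ldots,w^n_t$ are exchangeable. Then the optimal strategy (minimizing $J(g)$ over all strategies $g$) is characterized by the Bellman equation on the planning space $\mathcal{M}(n)\times\{0,1,2,\ldots\}$: for all $x\in\mathcal{M}(n)$ and $y\in\{0,1,2,\ldots\}$, $$V(x,y)=\min_{a\in\{0,1\}}\Big(\hat c(x,y,a)+\gamma\,\mathbb{E}\big[V(\hat f(x,y,o))\big]\Big),$$ where the expectation is over $o\in\mathcal{O}$ with distribution $$\mathbb{P}(o\mid x,y,a)=(1-aq)\,\mathbb{1}\{o=\mathtt{blank}\}+a\,q\,T_{\mathsf m}^{y+1}(o,x)\,\mathbb{1}\{o\neq\mathtt{blank}\};$$ i.e. the strategy which at every time $t$ selects an action attaining the minimum at $(x_t,y_t)$ is optimal.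
   Context: Setting: $n\in\mathbb{N}$ nodes, finite state set $\mathcal{S}\subset\mathbb{R}$, finite noise set $\mathcal{W}\subset\mathbb{R}$, time $t\in\mathbb{N}=\{1,2,\ldots\}$. Node $i$ has state $s^i_t\in\mathcal{S}$; the empirical distribution is $m_t(s)=\frac1n\sum_{i=1}^n\mathbb{1}\{s^i_t=s\}$, taking values in $\mathcal{M}(n)$, the set of probability vectors on $\mathcal{S}$ whose entries lie in $\{0,\frac1n,\ldots,1\}$. States evolve as $s^i_{t+1}=f(s^i_t,m_t,w^i_t)$ with local noise $w^i_t\in\mathcal{W}$. A decision maker picks $a_t\in\{0,1\}$ ($1$ = collect data). Observations $o_t\in\mathcal{O}=\mathcal{M}(n)\cup\{\mathtt{blank}\}$: $o_1=m_1$; if $a_t=0$ then $o_{t+1}=\mathtt{blank}$; if $a_t=1$ then $o_{t+1}=m_{t+1}$ with probability $q\in[0,1]$ (credible data) and $o_{t+1}=\mathtt{blank}$ with probability $1-q$. A strategy is $g=(g_1,g_2,\ldots)$ with $a_t=g_t(o_{1:t},a_{1:t-1})$. The initial states, noise vectors $(w^1_t,\ldots,w^n_t)$, $t\in\mathbb{N}$, and the Bernoulli($q$) credibility variables are mutually independent with finite variances. The estimate is $\hat m_t=h(\mathbb{P}(m_t\mid o_{1:t},a_{1:t-1}))\in\mathcal{M}(n)$ for a fixed function $h$ from probability distributions on $\mathcal{M}(n)$ to $\mathcal{M}(n)$. Per-step cost $c:\mathcal{M}(n)^2\times\{0,1\}\to\mathbb{R}_{\ge0}$ evaluated at $(m_t,\hat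 m_t,a_t)$; discount $\gamma\in(0,1)$; $J(g)=\mathbb{E}^g[\sum_{t=1}^\infty\gamma^{t-1}c(m_t,\hat m_t,a_t)]$. Under exchangeable noises $m_t$ is a (time-homogeneous) Markov chain with transition matrix $T_{\mathsf m}(m',m)=\mathbb{P}(m_{t+1}=m'\mid m_t=m)$; $T_{\mathsf m}^y$ is its $y$-th power and $T_{\mathsf m}^y(\cdot,x)$ the distribution after $y$ steps from $x$. $x_t$ denotes the last non-blank observation up to time $t$ and $y_t$ the number of blank observations since then, $(x_1,y_1)=(m_1,0)$, with $(x_{t+1},y_{t+1})=\hat f(x_t,y_t,o_{t+1})$ where $\hat f(x,y,o)=(x,y+1)$ if $o=\mathtt{blank}$ and $\hat f(x,y,o)=(o,0)$ otherwise. Define $\hat c(x,y,a)=\sum_{m\in\mathcal{M}(n)}c\big(m,h(T_{\mathsf m}^{y}(\cdot,x)),a\big)\,T_{\mathsf m}^{y}(m,x)$. *)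

From HB Require Import structures.
From mathcomp Require Import all_boot all_order all_algebra all_fingroup.
From mathcomp Require Import all_classical all_reals.
From mathcomp Require Import topology normedtype sequences.
Set Implicit Arguments. Unset Strict Implicit. Unset Printing Implicit Defensive.
Import Order.TTheory GRing.Theory Num.Theory numFieldNormedType.Exports.
Local Open Scope ring_scope.

(* Empirical distributions M(n).  An element of M(n) is encoded by its *)
(* vector of counts  k : S -> {0..n}  with  \sum_s k s = n ;  the      *)
(* probability vector it stands for is  s |-> k s / n  (see [mval]).   *)
Definition cnt_ok (n : nat) (S : finType) (v : {ffun S -> 'I_n.+1}) : bool :=
  (\sum_(s : S) (v s : nat) == n)%N.

Definition Mn (n : nat) (S : finType) : finType := {v : {ffun S -> 'I_n.+1} | cnt_ok v}.

Definition mval (R : realType) n (S : finType) (m : Mn n S) (s : S) : R :=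
  ((val m s : nat)%:R) / n%:R.

Definition cnt n (S : finType) (st : {ffun 'I_n -> S}) (x : S) : nat :=
  #|[pred i | st i == x]|.

Lemma cnt_lt n (S : finType) (st : {ffun 'I_n -> S}) (x : S) : (cnt st x < n.+1)%N.
Proof. rewrite ltnS /cnt; apply: leq_trans (max_card _) _; by rewrite card_ord. Qed.

Lemma cnt_sum n (S : finType) (st : {ffun 'I_n -> S}) :
  cnt_ok [ffun x => Ordinal (cnt_lt st x)].
Proof.
rewrite /cnt_ok; apply/eqP.
under eq_bigr => x _ do rewrite ffunE /= /cnt -sum1_card.
rewrite (exchange_big_dep xpredT) //=.
rewrite -[n in RHS]card_ord -sum1_card; apply: eq_bigr => i _.
by rewrite (big_pred1 (st i)) // => x; rewrite /= eq_sym.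
Qed.

Definition emp n (S : finType) (st : {ffun 'I_n -> S}) : Mn n S :=
  @exist _ (fun v => cnt_ok v) _ (cnt_sum st).

(* observations: [None] is the blank observation *)
Notation Obs n S := (option (Mn n S)).

Section Model.
Variables (R : realType) (S W : finType) (n : nat).
Variable f : S -> Mn n S -> W -> S.
Variable p0 : {ffun 'I_n -> S} -> R.
Variable pW : {ffun 'I_n -> W} -> R.
Variable q : R.
Variable h : (Mn n S -> R) -> Mn n S.
Variable c : Mn n S -> Mn n S -> bool -> R.     (* per-step cost c(m, mhat, a) *)
Variable gam : R.

Definition step (st : {ffun 'I_n -> S}) (w : {ffun 'I_n -> W}) : {ffun 'I_n -> S} :=
  [ffun i => f (st i) (emp st) (w i)].

(* A strategy: a_t = g t m_1 [o_2;..;o_t] [a_1;..;a_(t-1)]  (t is 0-based here: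
   g k is the paper's g_(k+1)). *)
Definition strategy := nat -> Mn n S -> seq (Obs n S) -> seq bool -> bool.

Definition hist := ({ffun 'I_n -> S} * Mn n S * seq (Obs n S) * seq bool)%type.

(* Joint law at (0-based) time k of (s_k, m_1, o_{2..k+1}, a_{1..k}), as a
   finitely supported distribution given by a weighted list. *)
Fixpoint dist (g : strategy) (k : nat) : seq (R * hist) :=
  match k with
  | 0 => [seq (p0 st, (st, emp st, [::], [::])) | st <- enum {ffun 'I_n -> S}]
  | k'.+1 =>
    flatten [seq
      let: (p, (st, m1, os, acts)) := e in
      let a := g k' m1 os acts in
      flatten [seq
        let st' := step st w in
        if a then
          [:: (p * pW w * q, (st', m1, rcons os (Some (emp st')), rcons acts true));
              (p * pW w * (1 - q), (st', m1, rcons os None, rcons acts true))]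
        else [:: (p * pW w, (st', m1, rcons os None, rcons acts false))]
      | w <- enum {ffun 'I_n -> W}]
    | e <- dist g k']
  end.

(* conditional law P(m_k = . | o_{1:k}, a_{1:k-1}) (0 on null histories) *)
Definition belief (g : strategy) (k : nat) (m1 : Mn n S) (os : seq (Obs n S))
    (acts : seq bool) (m : Mn n S) : R :=
  (\sum_(e <- dist g k | [&& e.2.1.1.2 == m1, e.2.1.2 == os, e.2.2 == acts
                          & emp e.2.1.1.1 == m]) e.1)
  / (\sum_(e <- dist g k | [&& e.2.1.1.2 == m1, e.2.1.2 == os & e.2.2 == acts]) e.1).

Definition exp_cost (g : strategy) (k : nat) : R :=
  \sum_(e <- dist g k)
    let: (p, (st, m1, os, acts)) := e in
    p * c (emp st) (h (belief g k m1 os acts)) (g k m1 os acts).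

Definition J (g : strategy) : R :=
  limn (series (fun k => gam ^+ k * exp_cost g k)).

(* Transition matrix of m_t: T(m', m) = P(m_{t+1} = m' | s_t = st) for any
   state vector st with empirical distribution m (well defined under
   exchangeability). *)
Definition Tm (m' m : Mn n S) : R :=
  if [pick st | emp st == m] is Some st then
    \sum_(w : {ffun 'I_n -> W}) pW w * (emp (step st w) == m')%:R
  else 0.

Fixpoint Tpow (y : nat) (x : Mn n S) : Mn n S -> R :=
  match y with
  | 0 => fun m => (m == x)%:R
  | y'.+1 => fun m' => \sum_(m : Mn n S) Tm m' m * Tpow y' x m
  end.

Definition chat (x : Mn n S) (y : nat) (a : bool) : R :=
  \sum_(m : Mn n S) c m (h (Tpow y x)) a * Tpow y x m.

Definition fhat (xy : Mn n S * nat) (o : Obs n S) : Mn n S * nat :=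
  match o with None => (xy.1, xy.2.+1) | Some m => (m, 0%N) end.

(* (x_t, y_t) computed from o_1 = m_1 and o_{2..t} *)
Definition xy_of (m1 : Mn n S) (os : seq (Obs n S)) : Mn n S * nat :=
  foldl fhat (m1, 0%N) os.

Definition Pobs (x : Mn n S) (y : nat) (a : bool) (o : Obs n S) : R :=
  match o with
  | None => 1 - (a%:R) * q
  | Some m => (a%:R) * q * Tpow y.+1 x m
  end.

Definition Qval (V : Mn n S -> nat -> R) (x : Mn n S) (y : nat) (a : bool) : R :=
  chat x y a +
  gam * (Pobs x y a None * V (fhat (x, y) None).1 (fhat (x, y) None).2
         + \sum_(m : Mn n S) Pobs x y a (Some m)
                              * V (fhat (x, y) (Some m)).1 (fhat (x, y) (Some m)).2).

Definition bellman (V : Mn n S -> nat -> R) : Prop :=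
  forall x y, V x y = Num.min (Qval V x y false) (Qval V x y true).

Definition bounded_V (V : Mn n S -> nat -> R) : Prop :=
  exists B : R, forall x y, `|V x y| <= B.

Definition greedy (V : Mn n S -> nat -> R) (g : strategy) : Prop :=
  forall k m1 os acts, size os = k -> size acts = k ->
    forall a, Qval V (xy_of m1 os).1 (xy_of m1 os).2 (g k m1 os acts)
              <= Qval V (xy_of m1 os).1 (xy_of m1 os).2 a.

End Model.

From HB Require Import structures.
From mathcomp Require Import all_boot all_order all_algebra all_fingroup.
From mathcomp Require Import all_classical all_reals.
From mathcomp Require Import topology normedtype sequences.
From mathcomp Require Import ring lra.
Import Order.TTheory GRing.Theory Num.Theory numFieldNormedType.Exports.
Local Open Scope ring_scope.

(* Under exchangeable noises, two state vectors with the same empirical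
   distribution are permutations of each other, and permuting the noise vector
   does not change its law; hence the law of m_(t+1) given the states depends
   only on m_t, through the kernel T.  By induction on t, the probability of an
   observed history H jointly with m_t = m is T^(y_t)(m, x_t) times the
   probability of H, so the belief is T^(y_t)(., x_t) and both the expected cost
   at time t and the law of the next observation are functions of
   (x_t, y_t, a_t).  For a bounded solution V of the Bellman equation this gives
   E V(x_t, y_t) <= E c_t + gam E V(x_(t+1), y_(t+1)) under every strategy, with
   equality under a greedy one; telescoping and letting t -> oo yields
   J(g* ) <= E V(x_1, y_1) <= J(g).  A bounded solution exists: value iteration
   from 0 is nondecreasing with k-th increment at most gam^k max c, so it
   converges to a fixed point of the Bellman operator. *)

Section EmpiricalDistribution.
Context {S : finType} {n : nat}.
Implicit Types st : {ffun 'I_n -> S}.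

Lemma cntE st x : cnt st x = count_mem x (map st (enum 'I_n)).
Proof. by rewrite enumT /cnt cardE /enum_mem size_filter count_map. Qed.

Lemma emp_eq_cnt st st' : emp st = emp st' <-> cnt st =1 cnt st'.
Proof.
split=> [/(congr1 val) /ffunP E x | E].
  by have := congr1 val (E x); rewrite !ffunE.
by apply: val_inj; apply/ffunP => x; rewrite !ffunE; apply: val_inj; apply: E.
Qed.

Lemma emp_perm st (s : 'S_n) : emp [ffun i => st (s i)] = emp st.
Proof.
apply/emp_eq_cnt => x; rewrite /cnt -!sum1_card.
rewrite [in RHS](reindex_inj (@perm_inj _ s)) /=.
by apply: eq_bigl => i; rewrite !inE ffunE.
Qed.

Lemma emp_eq_perm st st' :
  emp st' = emp st -> exists s : 'S_n, forall i, st' i = st (s i).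
Proof.
move/emp_eq_cnt => E.
have : perm_eq (map st' (enum 'I_n)) (map_tuple st (ord_tuple n)).
  by apply/allP => x _ /=; apply/eqP; rewrite -!cntE E.
case/tuple_permP => s Hs; exists s => i.
have := congr1 (fun l => nth (st' i) l i) Hs => /=.
rewrite (nth_map i) ?size_enum_ord // nth_ord_enum => ->.
by rewrite (nth_map i) ?size_enum_ord // nth_ord_enum tnth_map tnth_ord_tuple.
Qed.

End EmpiricalDistribution.

Lemma sum_indicatorl {R : pzSemiRingType} {T : finType} (x : T) (G : T -> R) :
  \sum_y (x == y)%:R * G y = G x.
Proof.
rewrite (bigD1 x) //= eqxx mul1r big1 ?addr0 // => y /negbTE.
by rewrite eq_sym => ->; rewrite mul0r.
Qed.

Lemma sum_indicatorr {R : pzSemiRingType} {T : finType} (x : T) (G : T -> R) :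
  \sum_y G y * (y == x)%:R = G x.
Proof.
rewrite -[RHS](sum_indicatorl x G); apply: eq_bigr => y _.
by rewrite eq_sym; case: (x == y); rewrite ?mulr1 ?mul1r ?mulr0 ?mul0r.
Qed.

Lemma sum_indicator1 {R : pzSemiRingType} {T : finType} (x : T) :
  \sum_y ((x == y)%:R : R) = 1.
Proof. by rewrite -[RHS](sum_indicatorl x (fun=> 1)); under [RHS]eq_bigr do rewrite mulr1. Qed.

Lemma big_partition_undup {R : nmodType} {T K : eqType} (s : seq T) (key : T -> K)
    (F : T -> R) :
  \sum_(e <- s) F e = \sum_(k <- undup (map key s)) \sum_(e <- s | key e == k) F e.
Proof.
under [RHS]eq_bigr do rewrite big_mkcond.
rewrite exchange_big /=; apply: eq_big_seq => e He.
have Hk : key e \in undup (map key s) by rewrite mem_undup; apply: map_f.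
rewrite (bigD1_seq _ Hk (undup_uniq _)) /= eqxx big1 ?addr0 // => k.
by rewrite eq_sym => /negbTE ->.
Qed.

Lemma discounted_telescope_le {R : numDomainType} {gam : R} {u v : nat -> R} (K : nat) :
  0 <= gam -> (forall k, u k <= v k + gam * u k.+1) ->
  u 0%N <= \sum_(0 <= k < K) gam ^+ k * v k + gam ^+ K * u K.
Proof.
move=> gam_ge0 uv; elim: K => [|K IH]; first by rewrite big_geq // expr0 mul1r add0r.
apply: (le_trans IH); rewrite big_nat_recr //= -addrA lerD2l exprSr -mulrA -mulrDr.
by apply: ler_wpM2l; [apply: exprn_ge0 | apply: uv].
Qed.

Lemma discounted_telescope_eq {R : comPzRingType} {gam : R} {u v : nat -> R} (K : nat) :
  (forall k, u k = v k + gam * u k.+1) ->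
  u 0%N = \sum_(0 <= k < K) gam ^+ k * v k + gam ^+ K * u K.
Proof.
move=> uv; elim: K => [|K IH]; first by rewrite big_geq // expr0 mul1r add0r.
by rewrite IH big_nat_recr //= -addrA exprSr -mulrA -mulrDr -uv.
Qed.

Lemma le_geometric_slack {R : realType} {gam a b : R} (C : R) :
  0 <= gam -> gam < 1 -> (forall k, a <= b + gam ^+ k * C) -> a <= b.
Proof.
move=> gam_ge0 gam_lt1 ab.
have slack_cvg : ((fun k => b + gam ^+ k * C) @ \oo --> b + 0 * C)%classic.
  by apply: cvgD; [apply: cvg_cst | apply: cvgMl; apply: cvg_expr; rewrite ger0_norm].
rewrite mul0r addr0 in slack_cvg.
rewrite -(cvg_lim _ slack_cvg); last exact: Rhausdorff.
by apply: limr_ge; [apply/cvg_ex; exists b | apply: nearW].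
Qed.

(** * The empirical distribution as a Markov chain *)

Section Model.
Variables (R : realType) (S W : finType) (n : nat).
Variable f : S -> Mn n S -> W -> S.
Variable p0 : {ffun 'I_n -> S} -> R.
Hypothesis p0_ge0 : forall st, 0 <= p0 st.
Hypothesis p0_sum1 : \sum_st p0 st = 1.
Variable pW : {ffun 'I_n -> W} -> R.
Hypothesis pW_ge0 : forall w, 0 <= pW w.
Hypothesis pW_sum1 : \sum_w pW w = 1.
Hypothesis pW_exch : forall (sigma : 'S_n) (w : {ffun 'I_n -> W}),
  pW [ffun i => w (sigma i)] = pW w.
Variable q : R.
Hypothesis q_ge0 : 0 <= q.
Hypothesis q_le1 : q <= 1.
Variable h : (Mn n S -> R) -> Mn n S.
Variable c : Mn n S -> Mn n S -> bool -> R.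
Hypothesis c_ge0 : forall m mh a, 0 <= c m mh a.
Variable gam : R.
Hypothesis gam_gt0 : 0 < gam.
Hypothesis gam_lt1 : gam < 1.
Let gam_ge0 : 0 <= gam := ltW gam_gt0.

Local Notation Tm := (Tm f pW).
Local Notation Tpow := (Tpow f pW).

(* The state vector picked in [Tm] is a permutation of [st]; reindexing the noise
   by that permutation preserves its law by exchangeability. *)
Lemma Tm_emp_step st m' :
  \sum_w pW w * (emp (step f st w) == m')%:R = Tm m' (emp st).
Proof.
rewrite /Tm; case: pickP => [st0 /eqP E|/(_ st)]; last by rewrite eqxx.
have [s Hs] := emp_eq_perm _ _ E.
have perm_bij : bijective (fun w : {ffun 'I_n -> W} => [ffun i => w (s i)]).
  exists (fun w : {ffun 'I_n -> W} => [ffun i => w ((s^-1)%g i)]) => w;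
    apply/ffunP => i; rewrite !ffunE ?permK ?permKV //.
rewrite [in RHS](reindex _ (onW_bij _ perm_bij)) /=; apply: eq_bigr => w _.
rewrite pW_exch; congr (_ * (_ == _)%:R).
rewrite -[in LHS](emp_perm _ s); congr emp; apply/ffunP => i.
by rewrite !ffunE Hs E.
Qed.

Lemma sum_step_Tm (G : Mn n S -> R) st :
  \sum_w pW w * G (emp (step f st w)) = \sum_m' Tm m' (emp st) * G m'.
Proof.
under [RHS]eq_bigr => m' _ do rewrite -Tm_emp_step mulr_suml.
rewrite exchange_big /=; apply: eq_bigr => w _.
rewrite -(sum_indicatorl (emp (step f st w)) G) mulr_sumr; apply: eq_bigr => m' _.
by rewrite mulrA.
Qed.

Lemma Tm_ge0 m' m : 0 <= Tm m' m.
Proof.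
rewrite /Tm; case: pickP => // st0 _.
by apply: sumr_ge0 => w _; apply: mulr_ge0.
Qed.

Lemma sum_Tm_le1 m : \sum_m' Tm m' m <= 1.
Proof.
rewrite /Tm; case: pickP => [st0 _|_]; last by rewrite big1.
rewrite exchange_big /= (eq_bigr pW) ?pW_sum1 // => w _.
by rewrite -mulr_sumr sum_indicator1 mulr1.
Qed.

Lemma TpowS y x m' : Tpow y.+1 x m' = \sum_m Tm m' m * Tpow y x m.
Proof. by []. Qed.

Lemma Tpow_ge0 y x m : 0 <= Tpow y x m.
Proof.
elim: y m => [|y IH] m /=; first by rewrite ler0n.
by apply: sumr_ge0 => m0 _; apply: mulr_ge0; [apply: Tm_ge0|apply: IH].
Qed.

Lemma sum_Tpow_le1 y x : \sum_m Tpow y x m <= 1.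
Proof.
elim: y => [|y IH] /=.
  by rewrite (eq_bigr (fun m => (x == m)%:R)) ?sum_indicator1 // => m _; rewrite eq_sym.
rewrite exchange_big /=; apply: le_trans IH; apply: ler_sum => m _.
by rewrite -mulr_suml; apply: ler_piMl; [apply: Tpow_ge0|apply: sum_Tm_le1].
Qed.

Local Notation Pobs := (Pobs f pW q).
Local Notation chat := (chat f pW h c).
Local Notation Qval := (Qval f pW q h c gam).

Definition expected_next (V : Mn n S -> nat -> R) x y a :=
  Pobs x y a None * V (fhat (x, y) None).1 (fhat (x, y) None).2
  + \sum_m Pobs x y a (Some m) * V (fhat (x, y) (Some m)).1 (fhat (x, y) (Some m)).2.

Lemma QvalE V x y a : Qval V x y a = chat x y a + gam * expected_next V x y a.
Proof. by []. Qed.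

Definition cmax := \sum_(i : Mn n S * Mn n S * bool) c i.1.1 i.1.2 i.2.

Lemma c_le_cmax m mh a : c m mh a <= cmax.
Proof. by rewrite /cmax (bigD1 (m, mh, a)) //= lerDl sumr_ge0. Qed.

Lemma cmax_ge0 : 0 <= cmax.
Proof. exact: sumr_ge0. Qed.

Lemma chat_ge0 x y a : 0 <= chat x y a.
Proof. by apply: sumr_ge0 => m _; apply: mulr_ge0 => //; apply: Tpow_ge0. Qed.

Lemma chat_le_cmax x y a : chat x y a <= cmax.
Proof.
apply: (@le_trans _ _ (\sum_m cmax * Tpow y x m)).
  by apply: ler_sum => m _; apply: ler_wpM2r; [apply: Tpow_ge0 | apply: c_le_cmax].
by rewrite -mulr_sumr; apply: ler_piMr; [apply: cmax_ge0 | apply: sum_Tpow_le1].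
Qed.

Lemma Pobs_ge0 x y a o : 0 <= Pobs x y a o.
Proof.
case: o => [m|]; first by apply: mulr_ge0; [rewrite mulr_ge0 ?ler0n | apply: Tpow_ge0].
by case: a; rewrite /= ?mul1r ?mul0r ?subr_ge0 ?subr0.
Qed.

Lemma sum_Pobs_le1 x y a : Pobs x y a None + \sum_m Pobs x y a (Some m) <= 1.
Proof.
have T_le1 := sum_Tpow_le1 y.+1 x.
case: a; rewrite /Pobs ?mul1r ?mul0r; last by rewrite big1 ?subr0 ?addr0 // => m _; rewrite mul0r.
rewrite -mulr_sumr; have : q * \sum_m Tpow y.+1 x m <= q by apply: ler_piMr.
lra.
Qed.

Lemma expected_next_mono {U U' : Mn n S -> nat -> R} x y a :
  (forall x y, U x y <= U' x y) -> expected_next U x y a <= expected_next U' x y a.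
Proof.
move=> UU'; apply: lerD; first by apply: ler_wpM2l; [apply: Pobs_ge0 | apply: UU'].
by apply: ler_sum => m _; apply: ler_wpM2l; [apply: Pobs_ge0 | apply: UU'].
Qed.

Lemma expected_next_shift (U : Mn n S -> nat -> R) d x y a :
  expected_next (fun x y => U x y + d) x y a =
  expected_next U x y a + d * (Pobs x y a None + \sum_m Pobs x y a (Some m)).
Proof.
rewrite /expected_next /=; under eq_bigr do rewrite mulrDr.
by rewrite big_split /= -mulr_suml; ring.
Qed.

(** * Value iteration *)

Definition bellman_op (U : Mn n S -> nat -> R) x y :=
  Num.min (Qval U x y false) (Qval U x y true).

Lemma bellman_op_mono U U' :
  (forall x y, U x y <= U' x y) -> forall x y, bellman_op U x y <= bellman_op U' x y.
Proof.
move=> UU' x y; have QQ' a : Qval U x y a <= Qval U' x y a.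
  rewrite !QvalE lerD2l; apply: ler_wpM2l; [exact: gam_ge0 | exact: expected_next_mono].
by rewrite le_min !ge_min !QQ' ?orbT.
Qed.

Lemma bellman_op_shift U U' d : 0 <= d -> (forall x y, U' x y <= U x y + d) ->
  forall x y, bellman_op U' x y <= bellman_op U x y + gam * d.
Proof.
move=> d_ge0 U'U x y.
have QQ' a : Qval U' x y a <= Qval U x y a + gam * d.
  rewrite !QvalE -addrA lerD2l -mulrDr; apply: ler_wpM2l; first exact: gam_ge0.
  apply: le_trans (expected_next_mono x y a U'U) _; rewrite expected_next_shift lerD2l.
  by apply: ler_piMr; [exact: d_ge0 | exact: sum_Pobs_le1].
rewrite /bellman_op [X in _ <= X + _]minEle; case: ifP => _.
  by apply: le_trans (QQ' false); rewrite ge_min lexx.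
by apply: le_trans (QQ' true); rewrite ge_min lexx orbT.
Qed.

Definition value_iter k := iter k bellman_op (fun _ _ => 0).

Definition Vmax := cmax / (1 - gam).

Lemma Vmax_ge0 : 0 <= Vmax.
Proof. by rewrite divr_ge0 ?cmax_ge0 // subr_ge0 ltW. Qed.

Lemma value_iter_step k x y :
  value_iter k x y <= value_iter k.+1 x y <= value_iter k x y + gam ^+ k * cmax.
Proof.
elim: k x y => [|k IH] x y.
  have Qval0 a : Qval (fun _ _ => 0) x y a = chat x y a.
    by rewrite QvalE /expected_next big1 => [|m _]; rewrite ?(mulr0, addr0).
  by rewrite /value_iter /= /bellman_op !Qval0 expr0 mul1r add0r le_min ge_min !chat_ge0 chat_le_cmax.
apply/andP; split; first by apply: bellman_op_mono => x' y'; case/andP: (IH x' y').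
rewrite exprS -mulrA; apply: bellman_op_shift => [|x' y'].
  by rewrite mulr_ge0 ?exprn_ge0 ?cmax_ge0 ?gam_ge0.
by case/andP: (IH x' y').
Qed.

Lemma value_iter_homo x y : {homo value_iter ^~ x ^~ y : i j / (i <= j)%N >-> i <= j}.
Proof. by apply/nondecreasing_seqP => k; case/andP: (value_iter_step k x y). Qed.

Lemma value_iter_addn_le k i x y :
  value_iter (k + i) x y <= value_iter k x y + (gam ^+ k - gam ^+ (k + i)) * Vmax.
Proof.
have cmaxE : cmax = Vmax * (1 - gam) by rewrite /Vmax mulfVK // subr_eq0 eq_sym lt_eqF.
elim: i => [|i IH]; first by rewrite addn0 subrr mul0r addr0.
rewrite addnS; apply: le_trans (proj2 (andP (value_iter_step _ x y))) _.
apply: le_trans (lerD IH (lexx _)) _.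
by rewrite cmaxE exprS le_eqVlt; apply/orP; left; apply/eqP; ring.
Qed.

Lemma value_iter_le k j x y : value_iter j x y <= value_iter k x y + gam ^+ k * Vmax.
Proof.
have [/subnKC <-|/ltnW/(value_iter_homo x y) jk] := leqP k j.
  apply: le_trans (value_iter_addn_le _ _ x y) _; rewrite lerD2l.
  by apply: ler_wpM2r; rewrite ?Vmax_ge0 // lerBlDr lerDl exprn_ge0.
by apply: le_trans jk _; rewrite lerDl mulr_ge0 ?exprn_ge0 ?gam_ge0 ?Vmax_ge0.
Qed.

Lemma is_cvg_value_iter x y : cvgn (value_iter ^~ x ^~ y).
Proof.
apply/cvg_ex; eexists; apply: nondecreasing_cvgn; first exact: value_iter_homo.
by exists Vmax => _ [j _ <-]; have := value_iter_le 0 j x y; rewrite expr0 mul1r add0r.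
Qed.

Definition value_lim x y := limn (value_iter ^~ x ^~ y).

Lemma value_iter_le_lim k x y : value_iter k x y <= value_lim x y.
Proof. exact: nondecreasing_cvgn_le (value_iter_homo x y) (is_cvg_value_iter x y) k. Qed.

Lemma value_lim_le k x y : value_lim x y <= value_iter k x y + gam ^+ k * Vmax.
Proof. by apply: limr_le; [apply: is_cvg_value_iter | apply: nearW => j; apply: value_iter_le]. Qed.

Lemma bellman_value_lim : bellman f pW q h c gam value_lim.
Proof.
move=> x y; apply: le_anti; apply/andP; split.
  apply: limr_le; first exact: is_cvg_value_iter.
  apply: nearW => j; apply: le_trans (proj1 (andP (value_iter_step j x y))) _.
  by apply: bellman_op_mono => x' y'; apply: value_iter_le_lim.
apply: (le_geometric_slack (gam * Vmax) gam_ge0 gam_lt1) => k.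
apply: le_trans (bellman_op_shift (value_iter k) value_lim (gam ^+ k * Vmax) _ _ x y) _.
- by rewrite mulr_ge0 ?exprn_ge0 ?gam_ge0 ?Vmax_ge0.
- by move=> x' y'; apply: value_lim_le.
by rewrite mulrCA lerD2r; apply: (value_iter_le_lim k.+1).
Qed.

Lemma bellman_solution_exists :
  exists V : Mn n S -> nat -> R, bounded_V V /\ bellman f pW q h c gam V.
Proof.
exists value_lim; split; last exact: bellman_value_lim.
exists Vmax => x y; rewrite ger0_norm; last exact: le_trans (value_iter_le_lim 0 x y).
by have := value_lim_le 0 x y; rewrite expr0 mul1r add0r.
Qed.

(** * Beliefs on the planning space *)

Definition info := (Mn n S * seq (Obs n S) * seq bool)%type.
Definition info_of (e : R * hist S n) : info := (e.2.1.1.2, e.2.1.2, e.2.2).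
Definition state_of (e : R * hist S n) := e.2.1.1.1.
Definition xy_info (H : info) := xy_of H.1.1 H.1.2.
Definition info_belief (H : info) := Tpow (xy_info H).2 (xy_info H).1.

Lemma xy_info_rcons m1 os o acts :
  xy_info (m1, rcons os o, acts) = fhat (xy_info (m1, os, acts)) o.
Proof. by rewrite /xy_info /xy_of /= foldl_rcons. Qed.

Definition obs_lik (a : bool) (m' : Mn n S) (o : Obs n S) : R :=
  if o is Some m0 then a%:R * q * (m' == m0)%:R else 1 - a%:R * q.

Lemma info_of_rcons p st m1' os' acts' o' a' m1 os o acts b :
  (info_of (p, (st, m1', rcons os' o', rcons acts' a')) == (m1, rcons os o, rcons acts b))
  = [&& (m1', os', acts') == (m1, os, acts), o' == o & a' == b].
Proof.
rewrite /info_of /= !xpair_eqE !eqseq_rcons.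
by case: (m1' == m1); case: (os' == os); case: (o' == o); case: (acts' == acts).
Qed.

Section Strategy.
Variable g : strategy S n.

Local Notation dist := (dist f p0 pW q g).

Definition act k (H : info) := g k H.1.1 H.1.2 H.2.

Definition succs k (e : R * hist S n) (w : {ffun 'I_n -> W}) : seq (R * hist S n) :=
  let st' := step f (state_of e) w in
  let: (m1, os, acts) := info_of e in
  if act k (info_of e) then
    [:: (e.1 * pW w * q, (st', m1, rcons os (Some (emp st')), rcons acts true));
        (e.1 * pW w * (1 - q), (st', m1, rcons os None, rcons acts true))]
  else [:: (e.1 * pW w, (st', m1, rcons os None, rcons acts false))].

Lemma distS k :
  dist k.+1 = flatten [seq flatten [seq succs k e w | w <- enum {ffun 'I_n -> W}]
                      | e <- dist k].
Proof.
rewrite /=; congr flatten; apply: eq_map => -[p [[[st m1] os] acts]] /=.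
by congr flatten; apply: eq_map => w.
Qed.

Lemma big_distS k (P : pred (R * hist S n)) (F : R * hist S n -> R) :
  \sum_(e <- dist k.+1 | P e) F e =
  \sum_(e <- dist k) \sum_w \sum_(e' <- succs k e w | P e') F e'.
Proof.
rewrite distS big_flatten big_map /=; apply: eq_bigr => e _.
by rewrite big_flatten big_map big_enum.
Qed.

Lemma dist_inv k e :
  e \in dist k -> [/\ 0 <= e.1, size e.2.1.2 = k & size e.2.2 = k].
Proof.
elim: k e => [|k IH] e; first by case/mapP => st _ ->; split; rewrite ?p0_ge0.
rewrite distS => /flatten_mapP [[p [[[st m1] os] acts]] /IH [/= p_ge0 s1 s2]].
case/flatten_mapP => w _; rewrite /succs /=.
case: ifP => _; rewrite !inE; first case/orP; move=> /eqP -> /=;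
  by rewrite !size_rcons s1 s2 !mulr_ge0 ?subr_ge0.
Qed.

Lemma succs_mass k e w : \sum_(e' <- succs k e w) e'.1 = e.1 * pW w.
Proof.
by rewrite /succs; case: (info_of e) => -[m1 os] acts; case: ifP => _;
  rewrite !big_cons big_nil /=; ring.
Qed.

Lemma dist_mass k : \sum_(e <- dist k) e.1 = 1.
Proof.
elim: k => [|k IH]; first by rewrite /= big_map -p0_sum1 big_enum.
rewrite big_distS -[RHS]IH; apply: eq_bigr => e _.
by under eq_bigr do rewrite succs_mass; rewrite -mulr_sumr pW_sum1 mulr1.
Qed.

Definition expect_on k H (Psi : Mn n S -> R) :=
  \sum_(e <- dist k | info_of e == H) e.1 * Psi (emp (state_of e)).

Definition mass k H := expect_on k H (fun=> 1).

Definition joint k H m := expect_on k H (fun m' => (m' == m)%:R).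

Lemma expect_on_joint k H Psi : expect_on k H Psi = \sum_m joint k H m * Psi m.
Proof.
under [RHS]eq_bigr do rewrite mulr_suml.
rewrite exchange_big /=; apply: eq_bigr => e _.
rewrite -(sum_indicatorl (emp (state_of e)) Psi) mulr_sumr.
by apply: eq_bigr => m _; rewrite mulrA.
Qed.

Lemma expect_on_size k H Psi :
  (size H.1.2 != k) || (size H.2 != k) -> expect_on k H Psi = 0.
Proof.
move=> Hsz; rewrite /expect_on big_seq_cond big1 // => e /andP [/dist_inv [_ s1 s2] /eqP He].
by rewrite -He /= s1 s2 !eqxx in Hsz.
Qed.

Lemma joint_belief0 H m : joint 0 H m = info_belief H m * mass 0 H.
Proof.
case: H => -[m1 os] acts.
have [Hsz|] := boolP ((size os != 0%N) || (size acts != 0%N)).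
  by rewrite /joint /mass !expect_on_size ?mulr0.
rewrite negb_or !negbK !size_eq0 => /andP [/eqP -> /eqP ->].
rewrite /joint /mass /expect_on /= !big_map mulr_sumr.
by apply: eq_bigr => st /eqP [->]; rewrite eq_sym mulr1 mulrC.
Qed.

Lemma sum_succs_info k e w m1 os o acts b (Psi : Mn n S -> R) :
  \sum_(e' <- succs k e w | info_of e' == (m1, rcons os o, rcons acts b))
     e'.1 * Psi (emp (state_of e')) =
  (info_of e == (m1, os, acts))%:R * (act k (info_of e) == b)%:R *
    (e.1 * pW w * (obs_lik (act k (info_of e)) (emp (step f (state_of e) w)) o *
                   Psi (emp (step f (state_of e) w)))).
Proof.
case: e => p [[[st m1'] os'] acts']; rewrite /succs /info_of /state_of /=.
case: (act k _) b o => [] [] [m0|];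
  rewrite ?big_cons big_nil !info_of_rcons ?(inj_eq Some_inj) /=;
  case: (_ == (m1, os, acts)); rewrite /= ?andbT ?andbF;
  try case: eqP => _; rewrite /= ?mulr1n ?mulr0n; ring.
Qed.

Lemma expect_onS k m1 os o acts b Psi :
  expect_on k.+1 (m1, rcons os o, rcons acts b) Psi =
  (act k (m1, os, acts) == b)%:R *
  \sum_(e <- dist k | info_of e == (m1, os, acts))
     e.1 * \sum_w pW w * (obs_lik (act k (m1, os, acts)) (emp (step f (state_of e) w)) o *
                          Psi (emp (step f (state_of e) w))).
Proof.
rewrite /expect_on big_distS [in RHS]big_mkcond mulr_sumr; apply: eq_bigr => e _.
under eq_bigr do rewrite sum_succs_info.
case: eqP => [->|_]; last by rewrite big1 ?mulr0 // => w _; rewrite !mul0r.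
by rewrite !mulr_sumr; apply: eq_bigr => w _; rewrite mul1r; ring.
Qed.

Lemma expect_on_step k H (G : Mn n S -> R) :
  (forall m, joint k H m = info_belief H m * mass k H) ->
  \sum_(e <- dist k | info_of e == H) e.1 * \sum_w pW w * G (emp (step f (state_of e) w)) =
  mass k H * \sum_m' Tpow (xy_info H).2.+1 (xy_info H).1 m' * G m'.
Proof.
move=> IH_H; under eq_bigr do rewrite sum_step_Tm.
rewrite -/(expect_on k H (fun m => \sum_m' Tm m' m * G m')) expect_on_joint.
under eq_bigr do rewrite IH_H.
under [in RHS]eq_bigr do rewrite TpowS mulr_suml.
rewrite [in RHS]exchange_big mulr_sumr; apply: eq_bigr => m _.
rewrite -mulrA mulrCA mulr_sumr; congr (_ * _); apply: eq_bigr => m' _.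
by rewrite /info_belief; ring.
Qed.

(* A credible observation collapses the belief to a point mass; a blank one
   propagates it by T. *)
Lemma joint_beliefS k :
  (forall H m, joint k H m = info_belief H m * mass k H) ->
  forall H m, joint k.+1 H m = info_belief H m * mass k.+1 H.
Proof.
move=> IH [[m1 os] acts] m.
case/lastP: os => [|os o]; first by rewrite /joint /mass !expect_on_size ?mulr0.
case/lastP: acts => [|acts b]; first by rewrite /joint /mass !expect_on_size ?mulr0 ?orbT.
have IH_H := IH (m1, os, acts).
rewrite /joint /mass !expect_onS; move: (act k (m1, os, acts)) => a.
case: o => [m0|].
- rewrite (expect_on_step _ _ (fun x => obs_lik a x (Some m0) * (x == m)%:R) IH_H).
  rewrite (expect_on_step _ _ (fun x => obs_lik a x (Some m0) * 1) IH_H).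
  rewrite /info_belief xy_info_rcons /obs_lik.
  move: (Tpow _.+1 _) (mass _ _) => T1 M /=.
  under eq_bigr do rewrite mulrA.
  under [in RHS]eq_bigr do rewrite mulr1 mulrA.
  rewrite !sum_indicatorr.
  by case: (eqVneq m m0) => [->|ne]; rewrite ?eqxx ?(negbTE ne) /= ?mulr1n ?mulr0n; ring.
- rewrite (expect_on_step _ _ (fun x => obs_lik a x None * (x == m)%:R) IH_H).
  have -> : \sum_(e <- dist k | info_of e == (m1, os, acts))
      e.1 * \sum_w pW w * (obs_lik a (emp (step f (state_of e) w)) None * 1) =
      mass k (m1, os, acts) * (1 - a%:R * q).
    rewrite /mass /expect_on mulr_suml; apply: eq_bigr => e _.
    by rewrite /obs_lik -mulr_suml pW_sum1; ring.
  rewrite /info_belief xy_info_rcons /obs_lik.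
  move: (Tpow _.+1 _) (mass _ _) => T1 M /=.
  under eq_bigr do rewrite mulrA.
  by rewrite sum_indicatorr; ring.
Qed.

Lemma joint_belief k H m : joint k H m = info_belief H m * mass k H.
Proof. by elim: k H m => [|k IH]; [apply: joint_belief0 | apply: joint_beliefS]. Qed.

Lemma sum_dist_belief k (G : info -> Mn n S -> R) (K : info -> R) :
  (forall H, mass k H != 0 -> \sum_m info_belief H m * G H m = K H) ->
  \sum_(e <- dist k) e.1 * G (info_of e) (emp (state_of e)) =
  \sum_(e <- dist k) e.1 * K (info_of e).
Proof.
move=> HK; rewrite (big_partition_undup _ info_of) [RHS](big_partition_undup _ info_of).
apply: eq_bigr => H _.
rewrite (eq_bigr (fun e => e.1 * G H (emp (state_of e)))); last by move=> e /eqP ->.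
rewrite [RHS](eq_bigr (fun e => e.1 * K H)); last by move=> e /eqP ->.
have -> : \sum_(e <- dist k | info_of e == H) e.1 * K H = mass k H * K H.
  by rewrite /mass /expect_on mulr_suml; apply: eq_bigr => e _; rewrite mulr1.
rewrite -/(expect_on k H (G H)) expect_on_joint.
under eq_bigr do rewrite joint_belief.
have [->|nz] := eqVneq (mass k H) 0; first by rewrite mul0r big1 // => m _; rewrite mulr0 mul0r.
by rewrite -(HK H nz) mulr_sumr; apply: eq_bigr => m _; ring.
Qed.

Lemma beliefE k m1 os acts :
  mass k (m1, os, acts) != 0 ->
  belief f p0 pW q g k m1 os acts = info_belief (m1, os, acts).
Proof.
move=> nz; apply: funext => m; rewrite /belief.
have -> : \sum_(e <- dist k | [&& e.2.1.1.2 == m1, e.2.1.2 == os, e.2.2 == acts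
    & emp e.2.1.1.1 == m]) e.1 = joint k (m1, os, acts) m.
  rewrite (eq_bigl (fun e => (info_of e == (m1, os, acts)) && (emp (state_of e) == m))).
    by rewrite big_mkcondr; apply: eq_bigr => e _; case: eqP; rewrite ?mulr1 ?mulr0.
  by move=> e; rewrite /info_of !xpair_eqE -!andbA.
have -> : \sum_(e <- dist k | [&& e.2.1.1.2 == m1, e.2.1.2 == os & e.2.2 == acts]) e.1
    = mass k (m1, os, acts).
  by apply: eq_big => [e|e _]; rewrite ?mulr1 // /info_of !xpair_eqE -!andbA.
by rewrite joint_belief mulfK.
Qed.

Lemma exp_costE k :
  exp_cost f p0 pW q h c g k =
  \sum_(e <- dist k) e.1 * chat (xy_info (info_of e)).1 (xy_info (info_of e)).2
                                (act k (info_of e)).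
Proof.
pose G H m := c m (h (belief f p0 pW q g k H.1.1 H.1.2 H.2)) (act k H).
rewrite /exp_cost (eq_bigr (fun e => e.1 * G (info_of e) (emp (state_of e)))); last first.
  by case=> p [[[st m1] os] acts].
rewrite (sum_dist_belief _ G (fun H => chat (xy_info H).1 (xy_info H).2 (act k H))) //.
move=> -[[m1 os] acts] nz; rewrite /G /chat beliefE //=.
by apply: eq_bigr => m _; rewrite mulrC.
Qed.

(** * Optimality of greedy strategies *)

Definition exp_value (V : Mn n S -> nat -> R) k :=
  \sum_(e <- dist k) e.1 * V (xy_info (info_of e)).1 (xy_info (info_of e)).2.

Lemma succs_value V k e :
  \sum_w \sum_(e' <- succs k e w) e'.1 * V (xy_info (info_of e')).1 (xy_info (info_of e')).2
  = e.1 * (Pobs (xy_info (info_of e)).1 (xy_info (info_of e)).2 (act k (info_of e)) None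
             * V (xy_info (info_of e)).1 (xy_info (info_of e)).2.+1
           + (act k (info_of e))%:R * q * \sum_m Tm m (emp (state_of e)) * V m 0%N).
Proof.
case: e => p [[[st m1] os] acts]; rewrite /succs /info_of /state_of /=.
have pW_avg (X : R) : X = \sum_w pW w * X by rewrite -mulr_suml pW_sum1 mul1r.
rewrite -(sum_step_Tm (fun m => V m 0%N)) mulr_sumr [X in _ = _ * (X + _)]pW_avg.
rewrite -big_split mulr_sumr.
apply: eq_bigr => w _; case: (act k _);
  by rewrite !big_cons big_nil /xy_info /xy_of !foldl_rcons /= ?mulr1n ?mulr0n; ring.
Qed.

Lemma exp_valueS V k :
  exp_value V k.+1 = \sum_(e <- dist k) e.1 *
    expected_next V (xy_info (info_of e)).1 (xy_info (info_of e)).2 (act k (info_of e)).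
Proof.
rewrite /exp_value big_distS; under eq_bigr do rewrite succs_value mulrDr.
rewrite big_split /=; under [RHS]eq_bigr do rewrite mulrDr.
rewrite [RHS]big_split /=; congr (_ + _).
rewrite (sum_dist_belief _ (fun H m => (act k H)%:R * q * \sum_m' Tm m' m * V m' 0%N)
  (fun H => \sum_m Pobs (xy_info H).1 (xy_info H).2 (act k H) (Some m) * V m 0%N)) // => H _.
under eq_bigr do rewrite !mulr_sumr.
under [RHS]eq_bigr do rewrite /Pobs /= mulr_sumr mulr_suml.
by rewrite exchange_big /=; apply: eq_bigr => m' _; apply: eq_bigr => m _; rewrite /info_belief; ring.
Qed.

Lemma sum_dist_Qval V k :
  \sum_(e <- dist k) e.1 *
    Qval V (xy_info (info_of e)).1 (xy_info (info_of e)).2 (act k (info_of e))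
  = exp_cost f p0 pW q h c g k + gam * exp_value V k.+1.
Proof.
rewrite exp_valueS exp_costE mulr_sumr -big_split /=; apply: eq_bigr => e _.
by rewrite QvalE; ring.
Qed.

Lemma exp_value_le V k : bellman f pW q h c gam V ->
  exp_value V k <= exp_cost f p0 pW q h c g k + gam * exp_value V k.+1.
Proof.
move=> HV; rewrite -sum_dist_Qval /exp_value big_seq [leRHS]big_seq.
apply: ler_sum => e /dist_inv [e_ge0 _ _]; apply: ler_wpM2l => //.
by rewrite HV ge_min; case: (act k _); rewrite lexx ?orbT.
Qed.

Lemma exp_value_greedy V k : bellman f pW q h c gam V -> greedy f pW q h c gam V g ->
  exp_value V k = exp_cost f p0 pW q h c g k + gam * exp_value V k.+1.
Proof.
move=> HV Hg; rewrite -sum_dist_Qval /exp_value big_seq [RHS]big_seq.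
apply: eq_bigr => e /dist_inv [_ size_os size_acts]; congr (_ * _).
rewrite HV; apply: le_anti; rewrite ge_min le_min !Hg //.
by case: (act k _); rewrite lexx ?orbT.
Qed.

Lemma exp_value_bound V B k : (forall x y, `|V x y| <= B) -> `|exp_value V k| <= B.
Proof.
move=> VB; apply: (le_trans (ler_norm_sum _ _ _)).
rewrite -[B]mul1r -(dist_mass k) mulr_suml big_seq [leRHS]big_seq.
apply: ler_sum => e /dist_inv [e_ge0 _ _].
by rewrite normrM ger0_norm // ler_wpM2l.
Qed.

Lemma exp_cost_ge0 k : 0 <= exp_cost f p0 pW q h c g k.
Proof.
rewrite exp_costE big_seq; apply: sumr_ge0 => e /dist_inv [e_ge0 _ _].
by rewrite mulr_ge0 ?chat_ge0.
Qed.

Lemma exp_cost_le_cmax k : exp_cost f p0 pW q h c g k <= cmax.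
Proof.
rewrite exp_costE -[leRHS]mul1r -(dist_mass k) mulr_suml big_seq [leRHS]big_seq.
by apply: ler_sum => e /dist_inv [e_ge0 _ _]; rewrite ler_wpM2l ?chat_le_cmax.
Qed.

Let disc_cost k := gam ^+ k * exp_cost f p0 pW q h c g k.

Lemma disc_cost_ge0 k : 0 <= disc_cost k.
Proof. by rewrite mulr_ge0 ?exprn_ge0 ?exp_cost_ge0 ?gam_ge0. Qed.

Lemma nondecreasing_disc_cost_series :
  {homo series disc_cost : i j / (i <= j)%N >-> i <= j}.
Proof. by apply: nondecreasing_series => k _ _; apply: disc_cost_ge0. Qed.

Lemma is_cvg_disc_cost_series : cvgn (series disc_cost).
Proof.
apply: (series_le_cvg disc_cost_ge0 (v_ := geometric cmax gam)).
- by move=> k; rewrite /geometric /= mulr_ge0 ?cmax_ge0 ?exprn_ge0 ?gam_ge0.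
- move=> k; rewrite /disc_cost /geometric /= mulrC.
  by apply: ler_wpM2r; [rewrite exprn_ge0 | apply: exp_cost_le_cmax].
- by apply: is_cvg_geometric_series; rewrite ger0_norm.
Qed.

End Strategy.

Lemma greedy_optimal V : bounded_V V -> bellman f pW q h c gam V ->
  forall gstar : strategy S n, greedy f pW q h c gam V gstar ->
  forall g : strategy S n, J f p0 pW q h c gam gstar <= J f p0 pW q h c gam g.
Proof.
move=> [B VB] HV gstar Hg g.
have exp_value_bounds (g' : strategy S n) K : - B <= exp_value g' V K <= B.
  by rewrite -ler_norml; apply: exp_value_bound.
have exp_value0 : exp_value gstar V 0 = exp_value g V 0 by [].
apply: (@le_trans _ _ (exp_value g V 0)).
- apply: limr_le; first exact: is_cvg_disc_cost_series.
  apply: nearW => j; apply: (le_geometric_slack (gam ^+ j * B) gam_ge0 gam_lt1) => i.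
  apply: le_trans (nondecreasing_disc_cost_series gstar j (j + i) (leq_addr _ _)) _.
  rewrite -exp_value0 (discounted_telescope_eq (j + i)%N (fun k => exp_value_greedy gstar V k HV Hg)).
  rewrite -addrA lerDl mulrA -exprD [(i + j)%N]addnC -mulrDr mulr_ge0 ?exprn_ge0 //.
  by case/andP: (exp_value_bounds gstar (j + i)%N) => exp_value_ge _; lra.
- apply: (le_geometric_slack B gam_ge0 gam_lt1) => K.
  apply: le_trans (discounted_telescope_le K gam_ge0 (fun k => exp_value_le g V k HV)) _.
  apply: lerD; first exact: (nondecreasing_cvgn_le (nondecreasing_disc_cost_series g)
                                                   (is_cvg_disc_cost_series g)).
  by apply: ler_wpM2l; [apply: exprn_ge0 | case/andP: (exp_value_bounds g K)].
Qed.

End Model.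

Theorem theorem3 (R : realType) (S W : finType) (n : nat) (n_gt0 : (0 < n)%N)
  (f : S -> Mn n S -> W -> S)
  (p0 : {ffun 'I_n -> S} -> R)
  (p0_ge0 : forall st, 0 <= p0 st) (p0_sum1 : \sum_st p0 st = 1)
  (pW : {ffun 'I_n -> W} -> R)
  (pW_ge0 : forall w, 0 <= pW w) (pW_sum1 : \sum_w pW w = 1)
  (pW_exch : forall (sigma : 'S_n) (w : {ffun 'I_n -> W}),
      pW [ffun i => w (sigma i)] = pW w)
  (q : R) (q_ge0 : 0 <= q) (q_le1 : q <= 1)
  (h : (Mn n S -> R) -> Mn n S)
  (c : Mn n S -> Mn n S -> bool -> R) (c_ge0 : forall m mh a, 0 <= c m mh a)
  (gam : R) (gam_gt0 : 0 < gam) (gam_lt1 : gam < 1) :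
  (exists V : Mn n S -> nat -> R,
      bounded_V V /\ bellman f pW q h c gam V) /\
  (forall V : Mn n S -> nat -> R,
      bounded_V V -> bellman f pW q h c gam V ->
      forall gstar : strategy S n, greedy f pW q h c gam V gstar ->
      forall g : strategy S n,
        J f p0 pW q h c gam gstar <= J f p0 pW q h c gam g).
Proof. by split; [apply: bellman_solution_exists | apply: greedy_optimal]. Qed.
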